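(* Consider the single-input single-output discrete-time closed-loop setting described in the context, fix $N$ finite and a DFT frequency $\omega_\ell$ at which $S(e^{j\omega_\ell})R(e^{j\omega_\ell})\neq 0$. Then, as $\sigma\to 0$ (Case 1, one experiment), \[ \sigma^{-1}(\widehat G_{\mathrm{dir}} - G) \leadsto \frac{1}{SR}\big(\bar V_y - G\bar V_u\big),\qquad \sigma^{-1}(\widehat G_{\mathrm{ind}} - G) \leadsto \frac{1}{S^2R}\bar V_y, \] where $\bar V_y,\bar V_u$ are zero-mean (statistically dependent) complex random variables with finite variances; and (Case 2, two independent experiments) \[ \sigma^{-1}(\widehat{\widehat G}_{\mathrm{io}} - G) \leadsto \frac{1}{SR}\big(\bar V_y^{(1)} - G\bar V_u^{(2)}\big), \] where $\bar V_y^{(1)}$ is independent of $\bar V_u^{(2)}$. Here $\leadsto$ denotes convergence in distribution.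
   Context: Setting: unit sample time, $\mathrm{q}$ the forward shift operator. Plant $G(\mathrm{q})$ and controller $C(\mathrm{q})$ are linear time-invariant and the closed-loop system is stable; $S = 1/(1+GC)$. Noise $v(k) = H(\mathrm{q})e(k)$ with $H$ a stable spectral factor, and $e(k) = \sigma\bar e(k)$ with $\bar e$ a zero-mean unit-variance white process whose distribution does not depend on $\sigma>0$. Reference $r(k)=r_2(k)+C(\mathrm{q})r_1(k)$ ($r_1,r_2$ known exogenous signals), $r$ periodic with period $N$. Plant output and input satisfy $y = SGr + Sv$, $u = Sr - SCv$. The data set $\{(r_k,u_k,y_k)\}_{k=0}^{N-1}$ is collected in steady state, consists of one period of $r$, and all records are time-synchronized with $r$. The $N$-point DFT is $X(e^{j\omega_\ell}) = N^{-1/2}\sum_{k=0}^{N-1}x_ke^{-j\omega_\ell k}$, $\omega_\ell=2\pi\ell/N$. At the fixed frequency, $G,S,C$ denote transfer function values at $e^{j\omega_\ell}$ and $R,U,Y$ the DFTs of $r,u,y$. The noise contributions $V_y,V_u$ are defined by $Y = SGR + V_y$, $U = SR + V_u$; they are linear in the noise and hence $\bar V_y := V_y/\sigma$, $\bar V_u := V_u/\sigma$ have distributions independent of $\sigma$. Estimators: $\widehat G_{\mathrm{dir}} := Y/U$; with $\widehat T_{yr} := Y/R$, $\widehat G_{\mathrm{ind}} := \widehat T_{yr}/(1-\widehat T_{yr}C)$. For Case 2, a second independent experiment with the same excitation $r$ is performed (identical deterministic parts, independent noise); $Y^{(1)}$ is the output DFT of experiment 1 with normalized noise contribution $\bar V_y^{(1)}$,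 $U^{(2)}$ the input DFT of experiment 2 with normalized noise contribution $\bar V_u^{(2)}$, and $\widehat{\widehat G}_{\mathrm{io}} := \dfrac{Y^{(1)}/R}{U^{(2)}/R}$. *)

From HB Require Import structures.
From mathcomp Require Import all_boot all_order all_algebra.
From mathcomp Require Import complex.
From mathcomp Require Import all_classical all_reals all_analysis.
Set Implicit Arguments. Unset Strict Implicit. Unset Printing Implicit Defensive.
Import Order.TTheory GRing.Theory Num.Theory ComplexField.
Import numFieldNormedType.Exports.
Local Open Scope classical_set_scope.
Local Open Scope ring_scope.

Definition reim {R : realType} (z : R[i]) : R * R := (complex.Re z, complex.Im z).

(* A complex random variable: measurable into R*R (= C with Borel sets). *)
Definition cmeasurable {R : realType} (d : measure_display) (T : measurableType d)
  (X : T -> R[i]) : Prop :=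
  measurable_fun setT (fun t => reim (X t)).

Definition cindep {R : realType} (d : measure_display) (T : measurableType d)
  (P : probability T R) (X Y : T -> R[i]) : Prop :=
  forall A B : set (R * R), measurable A -> measurable B ->
    P ((fun t => reim (X t)) @^-1` A `&` (fun t => reim (Y t)) @^-1` B)
    = (P ((fun t => reim (X t)) @^-1` A) * P ((fun t => reim (Y t)) @^-1` B))%E.

(* C carries no topology in the libraries, so
   continuity of f is expressed through the identification C = R * R
   (product topology = usual topology of C). *)
Definition cvg_distr_0 {R : realType} (d : measure_display) (T : measurableType d)
  (P : probability T R) (X : R -> T -> R[i]) (L : T -> R[i]) : Prop :=
  forall f : R[i] -> R, continuous (fun p : R * R => f (Complex p.1 p.2)) -> (exists M : R, forall z, `|f z| <= M) ->
    (fun s : R => (\int[P]_t (f (X s t))%:E)%E) @ 0^'+ --> (\int[P]_t (f (L t))%:E)%E.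

Definition sens {R : realType} (G C : R[i]) : R[i] := (1 + G * C)^-1.

(* DFT values of y and u at noise level sigma, with normalized noise contributions
   Vy, Vu (so that V_y = sigma Vy, V_u = sigma Vu). *)
Definition Ydft {R : realType} (G C Rr : R[i]) (s : R) (Vy : R[i]) : R[i] :=
  sens G C * G * Rr + (s%:C)%C * Vy.
Definition Udft {R : realType} (G C Rr : R[i]) (s : R) (Vu : R[i]) : R[i] :=
  sens G C * Rr + (s%:C)%C * Vu.

Definition Gdir {R : realType} (G C Rr : R[i]) (s : R) (Vy Vu : R[i]) : R[i] :=
  Ydft G C Rr s Vy / Udft G C Rr s Vu.
Definition Gind {R : realType} (G C Rr : R[i]) (s : R) (Vy : R[i]) : R[i] :=
  let Tyr := Ydft G C Rr s Vy / Rr in Tyr / (1 - Tyr * C).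
Definition Gio {R : realType} (G C Rr : R[i]) (s : R) (Vy1 Vu2 : R[i]) : R[i] :=
  (Ydft G C Rr s Vy1 / Rr) / (Udft G C Rr s Vu2 / Rr).

From mathcomp Require Import all_boot all_order all_algebra.
From mathcomp Require Import complex.
From mathcomp Require Import all_classical all_reals all_analysis.
From mathcomp Require Import ring lra.
From mathcomp Require Import measurable_realfun.
Import Order.TTheory GRing.Theory Num.Theory ComplexField.
Import numFieldNormedType.Exports.
Local Open Scope classical_set_scope.
Local Open Scope ring_scope.

(* For s > 0, wherever it is defined, each normalized estimation error equals
   a(t) / (b + s c(t)) with random a, c and a deterministic b != 0 (b = S R for
   the direct and the input/output estimators, b = S^2 R for the indirect one).
   It therefore converges pointwise on the sample space to a(t) / b as s -> 0+,
   and pointwise convergence implies convergence in distribution: for a bounded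
   continuous test function, dominated convergence with the constant bound
   applies along every sequence s_n -> 0+. *)

Section BorelPlane.
Context {R : realType}.

(* Every open set of the plane is a countable union of rational open squares
   contained in it. *)
Lemma open_measurable_prod (U : set (R * R)) : open U -> measurable U.
Proof.
move=> oU.
pose sq (a b c : rat) : set (R * R) := ball (ratr a : R, ratr b : R) (ratr c : R).
have msq a b c : measurable (sq a b c).
  have -> : sq a b c = ball (ratr a : R) (ratr c) `*` ball (ratr b : R) (ratr c).
    by apply/seteqP; split => p.
  by apply: measurableX; exact: measurable_ball.
have -> : U = \bigcup_(a : rat) \bigcup_(b : rat) \bigcup_(c : rat)
    (if asbool (sq a b c `<=` U) then sq a b c else set0).
  apply/seteqP; split => [p Up|p]; last first.
    by move=> [a _ [b _ [c _]]]; case: asboolP => // sqU; exact: sqU.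
  have /nbhs_ballP[e /= e0 peU] : nbhs p U by apply: open_nbhs_nbhs; split.
  have [a /andP[]] : exists a : rat, ratr a \in `]p.1 - e / 4, p.1 + e / 4[.
    by apply: rat_in_itvoo; lra.
  have [b /andP[]] : exists b : rat, ratr b \in `]p.2 - e / 4, p.2 + e / 4[.
    by apply: rat_in_itvoo; lra.
  have [c /andP[]] : exists c : rat, ratr c \in `]e / 4, e / 2[.
    by apply: rat_in_itvoo; lra.
  rewrite !bnd_simp => c1 c2 b1 b2 a1 a2.
  exists a => //; exists b => //; exists c => //.
  case: asboolP => [_|]; last first.
    move=> sqU; exfalso; apply: sqU => q [/= q1 q2]; apply: peU.
    move: q1 q2; rewrite /ball /= !ltr_norml => /andP[? ?] /andP[? ?].
    by split; rewrite /ball /= ltr_norml; apply/andP; split; lra.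
  by split => /=; rewrite /ball /= ltr_norml; apply/andP; split; lra.
by do 3 apply: bigcupT_measurable_rat => ?; case: asboolP.
Qed.

Lemma continuous_measurable_fun_prod (f : R * R -> R) :
  continuous f -> measurable_fun setT f.
Proof.
move=> /continuousP cf; apply: (measurability _ (RGenOpens.measurableE R)).
move=> _ [_ [a [b ->] <-]]; rewrite setTI; apply: open_measurable_prod.
exact/cf/interval_open.
Qed.

(* [x^-1] is the pointwise limit of the continuous [x / (x^2 + 1/(n+1))], also
   at [x = 0], where [0^-1 = 0]. *)
Lemma measurable_invr : measurable_fun setT (fun x : R => x^-1).
Proof.
apply: (@measurable_fun_cvg _ R R setT (fun n x => x / (x * x + n.+1%:R^-1))).
  move=> n; apply: continuous_measurable_fun => x.
  apply: cvgM; first exact: cvg_id.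
  apply: cvgV; last by apply: cvgD; [apply: cvgM; exact: cvg_id | exact: cvg_cst].
  by rewrite gt_eqF // ltr_wpDl ?invr_gt0 ?ltr0n // -expr2 sqr_ge0.
move=> x _; have [->|x0] := eqVneq x 0.
  by rewrite invr0; under eq_fun do rewrite mul0r; exact: cvg_cst.
have -> : x^-1 = x / (x * x + 0) by rewrite addr0 invfM mulrA divff // mul1r.
apply: cvgM; first exact: cvg_cst.
apply: cvgV; first by rewrite addr0 mulf_neq0.
by apply: cvgD; [exact: cvg_cst | exact: cvg_harmonic].
Qed.

End BorelPlane.

Section ComplexParts.
Context {R : realType}.
Implicit Types x y : R[i].

Lemma cReD x y : complex.Re (x + y) = complex.Re x + complex.Re y.
Proof. by case: x; case: y. Qed.

Lemma cImD x y : complex.Im (x + y) = complex.Im x + complex.Im y.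
Proof. by case: x; case: y. Qed.

Lemma cReN x : complex.Re (- x) = - complex.Re x.
Proof. by case: x. Qed.

Lemma cImN x : complex.Im (- x) = - complex.Im x.
Proof. by case: x. Qed.

Lemma cReM x y :
  complex.Re (x * y) = complex.Re x * complex.Re y - complex.Im x * complex.Im y.
Proof. by case: x; case: y. Qed.

Lemma cImM x y :
  complex.Im (x * y) = complex.Re x * complex.Im y + complex.Im x * complex.Re y.
Proof. by case: x; case: y. Qed.

Definition cnorm2 x := complex.Re x * complex.Re x + complex.Im x * complex.Im x.

Lemma cReV x : complex.Re x^-1 = complex.Re x / cnorm2 x.
Proof. by case: x. Qed.

Lemma cImV x : complex.Im x^-1 = - (complex.Im x / cnorm2 x).
Proof. by case: x. Qed.

Lemma cnorm2_gt0 x : x != 0 -> 0 < cnorm2 x.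
Proof.
case: x => a b nz; rewrite /cnorm2 /= lt_def addr_ge0 -?expr2 ?sqr_ge0 // andbT.
by apply: contra nz; rewrite paddr_eq0 ?sqr_ge0 // !sqrf_eq0 => /andP[/eqP-> /eqP->].
Qed.

End ComplexParts.

Section ComplexMeasurable.
Context {R : realType} {d : measure_display} {T : measurableType d}.
Implicit Types X Y : T -> R[i].

Lemma cmeasurableP X : cmeasurable X <->
  measurable_fun setT (fun t => complex.Re (X t)) /\
  measurable_fun setT (fun t => complex.Im (X t)).
Proof. exact: measurable_fun_pairP. Qed.

Lemma cmeasurable_cst (k : R[i]) : cmeasurable (fun _ : T => k).
Proof. by apply/cmeasurableP; split; exact: measurable_cst. Qed.

Lemma cmeasurableD X Y :
  cmeasurable X -> cmeasurable Y -> cmeasurable (fun t => X t + Y t).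
Proof.
move=> /cmeasurableP[? ?] /cmeasurableP[? ?]; apply/cmeasurableP; split.
  by under eq_fun do rewrite cReD; exact: measurable_funD.
by under eq_fun do rewrite cImD; exact: measurable_funD.
Qed.

Lemma cmeasurableN X : cmeasurable X -> cmeasurable (fun t => - X t).
Proof.
move=> /cmeasurableP[? ?]; apply/cmeasurableP; split.
  by under eq_fun do rewrite cReN; exact: measurable_funN.
by under eq_fun do rewrite cImN; exact: measurable_funN.
Qed.

Lemma cmeasurableM X Y :
  cmeasurable X -> cmeasurable Y -> cmeasurable (fun t => X t * Y t).
Proof.
move=> /cmeasurableP[? ?] /cmeasurableP[? ?]; apply/cmeasurableP; split.
  by under eq_fun do rewrite cReM; apply: measurable_funB; exact: measurable_funM.
by under eq_fun do rewrite cImM; apply: measurable_funD; exact: measurable_funM.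
Qed.

Lemma cmeasurableV X : cmeasurable X -> cmeasurable (fun t => (X t)^-1).
Proof.
move=> /cmeasurableP[? ?].
have mn : measurable_fun setT (fun t => (cnorm2 (X t))^-1).
  apply: (measurableT_comp (@measurable_invr R)).
  by apply: measurable_funD; exact: measurable_funM.
apply/cmeasurableP; split.
  by under eq_fun do rewrite cReV; exact: measurable_funM.
by under eq_fun do rewrite cImV; apply: measurable_funN; exact: measurable_funM.
Qed.

End ComplexMeasurable.

(* Syntactic dispatch: letting unification decide whether a subterm is
   constant in [t] unfolds the complex field operations and does not terminate
   in practice. *)
Ltac cmeasurable_rational :=
  lazymatch goal with
  | |- cmeasurable (fun _ => ?k) => exact: cmeasurable_cst
  | |- cmeasurable (fun t => _ + _) => apply: cmeasurableD; cmeasurable_rational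
  | |- cmeasurable (fun t => _ * _) => apply: cmeasurableM; cmeasurable_rational
  | |- cmeasurable (fun t => - _) => apply: cmeasurableN; cmeasurable_rational
  | |- cmeasurable (fun t => _^-1) => apply: cmeasurableV; cmeasurable_rational
  | |- _ => assumption
  end.

Definition ccvg {R : realType} {U : Type} (F : set_system U) (z : U -> R[i]) (l : R[i]) :=
  (fun s => complex.Re (z s)) @ F --> complex.Re l /\
  (fun s => complex.Im (z s)) @ F --> complex.Im l.

Section ComplexCvg.
Context {R : realType} {U : Type} {F : set_system U} {FF : ProperFilter F}.
Implicit Types (z w : U -> R[i]) (l m : R[i]).

Lemma ccvg_cst (k : R[i]) : ccvg F (fun _ => k) k.
Proof. by split; exact: cvg_cst. Qed.

Lemma ccvgD z w l m : ccvg F z l -> ccvg F w m -> ccvg F (fun s => z s + w s) (l + m).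
Proof.
move=> [? ?] [? ?]; split.
  by under eq_fun do rewrite cReD; rewrite cReD; exact: cvgD.
by under eq_fun do rewrite cImD; rewrite cImD; exact: cvgD.
Qed.

Lemma ccvgM z w l m : ccvg F z l -> ccvg F w m -> ccvg F (fun s => z s * w s) (l * m).
Proof.
move=> [? ?] [? ?]; split.
  by under eq_fun do rewrite cReM; rewrite cReM; apply: cvgB; exact: cvgM.
by under eq_fun do rewrite cImM; rewrite cImM; apply: cvgD; exact: cvgM.
Qed.

Lemma ccvg_cnorm2 {z l} : ccvg F z l -> (fun s => cnorm2 (z s)) @ F --> cnorm2 l.
Proof. by move=> [? ?]; apply: cvgD; exact: cvgM. Qed.

Lemma ccvgV z l : l != 0 -> ccvg F z l -> ccvg F (fun s => (z s)^-1) l^-1.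
Proof.
move=> l0 zl; have [? ?] := zl.
have n2 : (fun s => (cnorm2 (z s))^-1) @ F --> (cnorm2 l)^-1.
  by apply: cvgV; [rewrite gt_eqF ?cnorm2_gt0 | exact: ccvg_cnorm2].
split.
  by under eq_fun do rewrite cReV; rewrite cReV; exact: cvgM.
by under eq_fun do rewrite cImV; rewrite cImV; apply: cvgN; exact: cvgM.
Qed.

Lemma ccvg_neq0 {z l} : l != 0 -> ccvg F z l -> \forall s \near F, z s != 0.
Proof.
move=> l0 /ccvg_cnorm2 n2.
apply: filterS (cvgr_gt _ n2 _ (cnorm2_gt0 _ l0)) => s.
by apply: contraTN => /eqP->; rewrite /cnorm2 /= mul0r addr0 ltxx.
Qed.

Lemma ccvg_near_eq {z w l} : ccvg F z l -> (\forall s \near F, z s = w s) -> ccvg F w l.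
Proof.
move=> [zRe zIm] zw; split; [apply: cvg_trans zRe | apply: cvg_trans zIm];
  by apply: near_eq_cvg; apply: filterS zw => s /= ->.
Qed.

Lemma ccvg_comp {z l} {f : R[i] -> R} : ccvg F z l ->
  continuous (fun p : R * R => f (Complex p.1 p.2)) ->
  (fun s => f (z s)) @ F --> f l.
Proof.
move=> [zRe zIm] cf; pose g p := f (Complex p.1 p.2).
have fE x : f x = g (reim x) by case: x.
rewrite fE; under eq_fun do rewrite fE.
have zl : (fun s => reim (z s)) @ F --> reim l by exact: (cvg_pair zRe zIm).
exact: (cvg_comp _ _ zl (cf (reim l))).
Qed.

End ComplexCvg.

Section PerturbationAtZero.
Context {R : realType}.
Implicit Types a b c : R[i].

Lemma ccvg_real_at_right0 : ccvg (0 : R)^'+ (fun s => (s%:C)%C) 0.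
Proof. by split => /=; [apply: cvg_at_right_filter; exact: cvg_id | exact: cvg_cst]. Qed.

Lemma ccvg_affine_at_right0 b c : ccvg (0 : R)^'+ (fun s => b + (s%:C)%C * c) b.
Proof.
rewrite -[X in ccvg _ _ X]addr0 -[X in ccvg _ _ (_ + X)](mul0r c).
apply: ccvgD; first exact: ccvg_cst.
by apply: ccvgM; [exact: ccvg_real_at_right0 | exact: ccvg_cst].
Qed.

Lemma ccvg_div_affine_at_right0 a b c : b != 0 ->
  ccvg (0 : R)^'+ (fun s => a / (b + (s%:C)%C * c)) (a / b).
Proof.
move=> b0; apply: ccvgM; first exact: ccvg_cst.
by apply: ccvgV => //; exact: ccvg_affine_at_right0.
Qed.

End PerturbationAtZero.

Section ConvergenceInDistribution.
Context {R : realType} {d : measure_display} {T : measurableType d}.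
Variable P : probability T R.

Lemma measurable_fun_ccomp (f : R[i] -> R) (X : T -> R[i]) :
  continuous (fun p : R * R => f (Complex p.1 p.2)) -> cmeasurable X ->
  measurable_fun setT (fun t => f (X t)).
Proof.
move=> /continuous_measurable_fun_prod mf mX.
have fE x : f x = f (Complex (reim x).1 (reim x).2) by case: x.
by under eq_fun do rewrite fE; exact: measurableT_comp mf mX.
Qed.

Lemma cvg_distr_0_pointwise (X : R -> T -> R[i]) (L : T -> R[i]) :
  (forall s, 0 < s -> cmeasurable (X s)) -> cmeasurable L ->
  (forall t, ccvg (0 : R)^'+ (fun s => X s t) (L t)) -> cvg_distr_0 P X L.
Proof.
move=> mX mL cX f cf [M fM].
have mfL : measurable_fun setT (fun t => (f (L t))%:E).
  exact/measurable_EFinP/measurable_fun_ccomp.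
have intM : P.-integrable setT (EFin \o cst M) by exact: finite_measure_integrable_cst.
have intL : P.-integrable setT (fun t => (f (L t))%:E).
  apply: le_integrable mfL _ intM => // t _ /=.
  by rewrite lee_fin (le_trans (fM _)) // ler_norm.
have finL := integrable_fin_num measurableT intL.
rewrite -(fineK finL); apply/cvge_at_rightP => u [u0 uc]; rewrite fineK //.
apply: (@dominated_cvg _ _ _ P setT measurableT _ _ (EFin \o cst M)) => //.
- by move=> n; exact/measurable_EFinP/measurable_fun_ccomp/mX.
- move=> t _; apply: cvg_EFin; first exact: nearW.
  exact: (cvg_at_rightP _ _ _).1 (ccvg_comp (cX t) cf) u (conj u0 uc).
- by move=> n t _ /=; rewrite lee_fin fM.
Qed.

Lemma cvg_distr_0_div_affine (a c : T -> R[i]) (b : R[i])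
    (X : R -> T -> R[i]) (L : T -> R[i]) :
  b != 0 -> (forall s, 0 < s -> cmeasurable (X s)) -> cmeasurable L ->
  (forall t, L t = a t / b) ->
  (forall s t, 0 < s -> b + (s%:C)%C * c t != 0 ->
     X s t = a t / (b + (s%:C)%C * c t)) ->
  cvg_distr_0 P X L.
Proof.
move=> b0 mX mL LE XE; apply: cvg_distr_0_pointwise => // t; rewrite LE.
have denom_neq0 : \forall s \near (0 : R)^'+, b + (s%:C)%C * c t != 0.
  exact: ccvg_neq0 b0 (ccvg_affine_at_right0 _ _).
apply: ccvg_near_eq (ccvg_div_affine_at_right0 (a t) _ (c t) b0) _.
near=> s; rewrite XE //; near: s; exact: denom_neq0.
Unshelve. all: by end_near.
Qed.

End ConvergenceInDistribution.

Section EstimationErrors.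
Context {R : realType}.
Variables (G C Rr : R[i]) (s : R).
Hypothesis s_neq0 : s != 0.
Let sC : R[i] := (s%:C)%C.

Let sC_neq0 : sC != 0.
Proof. by rewrite /sC (inj_eq (@complexI R)). Qed.

Lemma scaled_error_Gdir Vy Vu : sens G C * Rr + sC * Vu != 0 ->
  ((s^-1)%:C)%C * (Gdir G C Rr s Vy Vu - G) = (Vy - G * Vu) / (sens G C * Rr + sC * Vu).
Proof. by move=> U0; rewrite fmorphV /Gdir /Ydft /Udft -/sC; field; rewrite U0 sC_neq0. Qed.

Lemma scaled_error_Gio Vy1 Vu2 : Rr != 0 -> sens G C * Rr + sC * Vu2 != 0 ->
  ((s^-1)%:C)%C * (Gio G C Rr s Vy1 Vu2 - G) = (Vy1 - G * Vu2) / (sens G C * Rr + sC * Vu2).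
Proof.
by move=> Rr0 U0; rewrite fmorphV /Gio /Ydft /Udft -/sC; field; rewrite U0 sC_neq0 Rr0.
Qed.

(* With [S = sens G C], the closed loop gives [1 - Tyr C = S - s Vy C / Rr], and
   [Tyr / (1 - Tyr C) - G] collapses to [s (Vy / Rr) (1 + G C) / (1 - Tyr C)]. *)
Lemma scaled_error_Gind Vy : 1 + G * C != 0 -> Rr != 0 ->
  sens G C ^+ 2 + sC * - (sens G C * Vy * C / Rr) != 0 ->
  ((s^-1)%:C)%C * (Gind G C Rr s Vy - G) =
  (Vy / Rr) / (sens G C ^+ 2 + sC * - (sens G C * Vy * C / Rr)).
Proof.
move=> GC0 Rr0 D0; rewrite fmorphV /Gind /Ydft /sens -/sC /= in D0 *.
have D1 : Rr + sC * - (Vy * C) * (1 + G * C) != 0.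
  suff -> : Rr + sC * - (Vy * C) * (1 + G * C) =
      ((1 + G * C)^-1 ^+ 2 + sC * - ((1 + G * C)^-1 * Vy * C / Rr)) * (Rr * (1 + G * C) ^+ 2).
    by rewrite !mulf_neq0 ?expf_neq0.
  by field; rewrite GC0 Rr0.
by field; rewrite Rr0 GC0 sC_neq0 D1.
Qed.

End EstimationErrors.

Theorem lemma1 (R : realType) (d : measure_display) (T : measurableType d)
  (P : probability T R) (G C Rr : R[i]) (Vy Vu Vy1 Vu2 : T -> R[i]) :
  sens G C * Rr != 0 ->
  cmeasurable Vy -> cmeasurable Vu -> cmeasurable Vy1 -> cmeasurable Vu2 ->
  cindep P Vy1 Vu2 ->
  [/\ cvg_distr_0 P (fun s t => ((s^-1)%:C)%C * (Gdir G C Rr s (Vy t) (Vu t) - G))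
        (fun t => (sens G C * Rr)^-1 * (Vy t - G * Vu t)),
      cvg_distr_0 P (fun s t => ((s^-1)%:C)%C * (Gind G C Rr s (Vy t) - G))
        (fun t => (sens G C ^+ 2 * Rr)^-1 * Vy t)
    & cvg_distr_0 P (fun s t => ((s^-1)%:C)%C * (Gio G C Rr s (Vy1 t) (Vu2 t) - G))
        (fun t => (sens G C * Rr)^-1 * (Vy1 t - G * Vu2 t))].
Proof.
(* Independence of the two experiments only describes the law of the Case 2
   limit; the convergence itself holds for any joint law. *)
move=> SR0 mVy mVu mVy1 mVu2 _.
have /andP[S0 Rr0] : (sens G C != 0) && (Rr != 0) by rewrite -negb_or -mulf_eq0.
have GC0 : 1 + G * C != 0 by apply: contra S0 => /eqP GC0; rewrite /sens GC0 invr0.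
split.
- apply: (cvg_distr_0_div_affine P (fun t => Vy t - G * Vu t) Vu _ _ _ SR0).
  + by move=> s _; rewrite /Gdir /Ydft /Udft; cmeasurable_rational.
  + by cmeasurable_rational.
  + by move=> t; rewrite mulrC.
  + by move=> s t /lt0r_neq0 s0 U0; rewrite scaled_error_Gdir.
- have S20 : sens G C ^+ 2 != 0 by rewrite expf_neq0.
  apply: (cvg_distr_0_div_affine P (fun t => Vy t / Rr)
    (fun t => - (sens G C * Vy t * C / Rr)) _ _ _ S20).
  + by move=> s _; rewrite /Gind /Ydft /=; cmeasurable_rational.
  + by cmeasurable_rational.
  + by move=> t; rewrite mulrC invfM [_^-1 * _]mulrC mulrA.
  + by move=> s t /lt0r_neq0 s0 D0; rewrite scaled_error_Gind.
- apply: (cvg_distr_0_div_affine P (fun t => Vy1 t - G * Vu2 t) Vu2 _ _ _ SR0).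
  + by move=> s _; rewrite /Gio /Ydft /Udft; cmeasurable_rational.
  + by cmeasurable_rational.
  + by move=> t; rewrite mulrC.
  + by move=> s t /lt0r_neq0 s0 U0; rewrite scaled_error_Gio.
Qed.
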